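(* Consider a unidirectional ring network of $M$ nodes (in the setting described in the context) under non-preemptive fixed-priority (FP) multiplexing, where each node $k$ offers a strict rate-latency service curve $\beta^k(t)=R^k(t-T^k)^+$ and each flow $i$ is leaky-bucket constrained with initial arrival curve $\sigma_i^0+\rho_i t$ at its source and arrival curve $\sigma_i^{k\ominus1}+\rho_i t$ at the input of each node $k$ on its path. Let $f$ be a flow and $n\in[1,h_f]$. Then the service curve offered to $f$ along $subpath_f(n)$ is the rate-latency curve $$\beta_f^{subpath_f(n)}(t)=R^{subpath_f(n)}\bigl(t-T^{subpath_f(n)}\bigr)^+,$$ where $$R^{subpath_f(n)}=\min_{k\in subpath_f(n)}\Bigl[R^k-\sum_{j\in hp_f^k}\rho_j\Bigr],$$ $$T^{subpath_f(n)}=\sum_{k\in subpath_f(n)}\Bigl(T^k+\frac{\max_{j\in lp_f^k}L_{max}(j)}{R^k}\Bigr)+\sum_{i\in\mathbb{K}_{\le f}(n)}\frac{\sigma_i^{f.first\ominus1}\,1_{\{i\ni f.first,\ i.first\neq f.first\}}}{R^{subpath_f(n)}}$$ $$\qquad+\sum_{i\in\mathbb{K}_{\le f}(n)}\frac{\sigma_i^0\,1_{\{f\ni i.first\}}+\rho_i\sum_{j\in subpath_f(n)\cap path_i}\Bigl(T^j+\frac{\max_{p\in lp_f^j}L_{max}(p)}{R^j}\Bigr)}{R^{subpath_f(n)}}.$$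
   Context: Network Calculus setting: flows are described by cumulative functions $F(t)$; $\alpha$ is an arrival curve if $F\le F\otimes\alpha$ with $(f\otimes g)(t)=\inf_{0\le s\le t}\{f(t-s)+g(s)\}$; $\beta$ is a service curve if output $F^*\ge F\otimes\beta$, strict if $F^*(t)-F^*(s)\ge\beta(t-s)$ on every backlogged period $(s,t)$. $[x]^+=\max(x,0)$. A service curve offered to $f$ along a subpath relates the input of $f$ at the first node of the subpath to its output at its last node. Ring model: nodes $1,\dots,M$ in a unidirectional ring, $l\oplus k=(l+k)\bmod M$, $l\ominus k=(l-k)\bmod M$. Each flow $i$ in a fixed finite set has path $path_i=(0,i.first,i.first\oplus1,\dots,i.first\oplus(h_i-1))$ with virtual source $0$, first hop $i.first$, $h_i\le M$ hops; $subpath_i(n)=(0,i.first,\dots,i.first\oplus(n-1))$. ''$i\ni k$'' means flow $i$ crosses node $k$. $\sigma_i^{k\ominus1}$ is the burst of flow $i$'s arrival curve at the input of node $k$; $\sigma_i^0$ its initial burst. The network is stable: $\sum_{i\ni k}\rho_i\le R^k$ for all $k$. FP notation: each flow $i$ has priority level $P(i)$ (0 is highest) and maximum packet length $L_{max}(i)$ (including protocol overhead); packets are transmitted non-preemptively, higher priority served first, flows within the same priority served in arbitrary order. $hp_f^k=\{i\neq f: i\ni k,\ P(i)\le P(f)\}$, $lp_f^k=\{i\ni k: P(i)>P(f)\}$ (the max over an empty set is taken as $0$), and $\mathbb{K}_{\le f}(n)=\{i\neq f:\exists k\in subpath_f(n),\ i\ni k,\ P(i)\le P(f)\}$. *)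

From HB Require Import structures.
From mathcomp Require Import all_boot all_order all_algebra.
From mathcomp Require Import boolp classical_sets reals.
Set Implicit Arguments. Unset Strict Implicit. Unset Printing Implicit Defensive.
Import Order.TTheory GRing.Theory Num.Theory.
Local Open Scope classical_set_scope.
Local Open Scope ring_scope.

Section NC.
Variable R : realType.

Definition pos (x : R) : R := Num.max 0 x.

Definition minplus_conv (f g : R -> R) (t : R) : R :=
  inf [set f (t - s) + g s | s in `[0, t]].

Definition arrival_curve (F alpha : R -> R) : Prop :=
  forall t, 0 <= t -> F t <= minplus_conv F alpha t.

Definition service_curve (F Fs beta : R -> R) : Prop :=
  forall t, 0 <= t -> minplus_conv F beta t <= Fs t.

Definition cumulative (F : R -> R) : Prop :=
  F 0 = 0 /\ forall s t, 0 <= s -> s <= t -> F s <= F t.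

Definition leaky_bucket (sigma rho : R) (t : R) : R := sigma + rho * t.
Definition rate_latency (Rt T : R) (t : R) : R := Rt * pos (t - T).
End NC.

(* ---------------- ring topology ----------------
   Nodes are labelled 0,...,M-1 (instead of 1,...,M); l (+) m = (l + m) mod M.
   A flow with first hop [fst] and [h] hops visits the nodes
   fst, fst(+)1, ..., fst(+)(h-1). The virtual source 0 of the paper is not a node. *)
Definition ring_node (M fst m : nat) : nat := (fst + m) %% M.

Definition path_nodes (M fst n : nat) : seq nat := [seq ring_node M fst m | m <- iota 0 n].

Section Ring.
Variables (M : nat) (Flow : finType) (first : Flow -> nat) (h : Flow -> nat)
          (P : Flow -> nat).

Definition crosses (i : Flow) (k : nat) : bool := k \in path_nodes M (first i) (h i).

Definition hp (f : Flow) (k : nat) : {set Flow} :=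
  [set i | (i != f) && crosses i k && (P i <= P f)%N].
Definition lp (f : Flow) (k : nat) : {set Flow} :=
  [set i | crosses i k && (P f < P i)%N].

Definition Kle (f : Flow) (n : nat) : {set Flow} :=
  [set i | (i != f) && (P i <= P f)%N && has (crosses i) (path_nodes M (first f) n)].
End Ring.

(* Fix t and walk f's subpath backwards: at node m, starting from the time tau (m+1)
   at which its output is observed, let tau m be (up to an arbitrary slack) the start of
   the backlogged period of the flows of priority at least P f.  Strict service minus
   one blocking lower-priority packet gives these flows an output of at least
   (Rsub + sum of their rates) * (tau (m+1) - tau m - lat m) on that period.  Summing
   over the nodes, the outputs of f telescope to D_f(t) - A_f(tau 0), since f is idle
   at every tau m and leaves node m into node m+1.  The outputs of an interfering flow j
   telescope along each maximal run of consecutive nodes that j shares with f -- on a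
   ring there are at most two, one entering at f.first and one starting at j.first --
   and each run is bounded by j's burst at its entry plus rho_j times its duration.
   Rearranging yields, up to the slack, A_f(tau 0) + Rsub (t - tau 0 - Tsub) <= D_f(t). *)

From HB Require Import structures.
From mathcomp Require Import all_boot all_order all_algebra.
From mathcomp Require Import boolp classical_sets reals.
From mathcomp Require Import zify lra.
Set Implicit Arguments. Unset Strict Implicit. Unset Printing Implicit Defensive.
Import Order.TTheory GRing.Theory Num.Theory.
Local Open Scope ring_scope.

Section NetworkCalculus.
Context {R : realType}.
Implicit Types (F G : R -> R) (x y s t : R).

Lemma pos_ge x : x <= pos x.
Proof. by rewrite /pos le_max lexx orbT. Qed.

Lemma pos_ge0 x : 0 <= pos x.
Proof. by rewrite /pos le_max lexx. Qed.

Lemma posB_le x y : x <= y -> pos y - pos x <= y - x.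
Proof. by rewrite /pos; case: (leP 0 x); case: (leP 0 y); lra. Qed.

Lemma cumulative_ge0 F t : cumulative F -> 0 <= t -> 0 <= F t.
Proof. by move=> [F0 Fmono] t0; rewrite -F0; apply: Fmono. Qed.

Lemma minplus_conv_le F G t s :
  (forall y, 0 <= y -> y <= t -> 0 <= F (t - y) + G y) ->
  0 <= s -> s <= t -> minplus_conv F G t <= F (t - s) + G s.
Proof.
move=> FG0 s0 st.
have Es : [set F (t - y) + G y | y in `[0, t]]%classic (F (t - s) + G s).
  by exists s; rewrite //= in_itv /= s0 st.
have lb : has_lbound [set F (t - y) + G y | y in `[0, t]]%classic.
  by exists 0 => z [y]; rewrite /= in_itv /= => /andP[y0 yt] <-; apply: FG0.
exact: (ge_inf lb Es).
Qed.

Lemma leaky_bucket_increment F sg rh a b :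
  cumulative F -> arrival_curve F (leaky_bucket sg rh) -> 0 <= sg -> 0 <= rh ->
  0 <= a -> a <= b -> F b - F a <= sg + rh * (b - a).
Proof.
move=> cF aF sg0 rh0 a0 ab; have b0 : 0 <= b by apply: le_trans ab.
have conv : minplus_conv F (leaky_bucket sg rh) b
            <= F (b - (b - a)) + leaky_bucket sg rh (b - a).
  apply: minplus_conv_le; last 2 first.
  - by rewrite subr_ge0.
  - by rewrite lerBlDr lerDl.
  move=> y y0 yb; apply: addr_ge0; first by apply: cumulative_ge0; rewrite ?subr_ge0.
  by apply: addr_ge0 => //; apply: mulr_ge0.
rewrite opprB subrKC /leaky_bucket in conv.
by have := le_trans (aF b b0) conv; lra.
Qed.

(* [Rr * pos (t - s - T) = max 0 (Rr * (t - s - T))], so two linear bounds suffice. *)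
Lemma rate_latency_service_curve F G Rr T :
  cumulative F -> 0 <= Rr ->
  (forall t e, 0 <= t -> 0 < e -> exists2 s, 0 <= s <= t &
     F s <= G t + e /\ F s + Rr * (t - s - T) <= G t + e) ->
  service_curve F G (rate_latency Rr T).
Proof.
move=> cF Rr0 wit t t0; apply/ler_addgt0Pr => e e0.
have [s /andP[s0 st] [Fs_le FsT_le]] := wit t e t0 e0.
have conv : minplus_conv F (rate_latency Rr T) t
            <= F (t - (t - s)) + rate_latency Rr T (t - s).
  apply: minplus_conv_le; last 2 first.
  - by rewrite subr_ge0.
  - by rewrite lerBlDr lerDl.
  move=> y y0 yt; apply: addr_ge0; first by apply: cumulative_ge0; rewrite ?subr_ge0.
  by apply: mulr_ge0 => //; apply: pos_ge0.
apply: le_trans conv _; rewrite opprB subrKC /rate_latency /pos.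
by case: (leP 0 (t - s - T)) => _; rewrite ?mulr0 ?addr0.
Qed.

Lemma residual_rate_latency (Rr T Lb Rs x y : R) :
  0 < Rr -> 0 <= Lb -> 0 <= Rs -> Rs <= Rr -> 0 <= y ->
  Rr * pos (x - T) - Lb <= y -> Rs * (x - (T + Lb / Rr)) <= y.
Proof.
move=> Rr0 Lb0 Rs0 RsRr y0 bound.
case: (leP (T + Lb / Rr) x) => [lat_x | x_lat]; last first.
  by apply: le_trans y0; apply: mulr_ge0_le0; rewrite // subr_le0 ltW.
have lat_pos : 0 <= x - (T + Lb / Rr) by rewrite subr_ge0.
apply: le_trans (ler_wpM2r lat_pos RsRr) (le_trans _ bound).
have -> : Rr * (x - (T + Lb / Rr)) = Rr * (x - T) - Lb.
  by rewrite mulrBr mulrDr mulrCA divff ?mulr1 ?gt_eqF // mulrBr opprD addrA.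
by rewrite lerD2r; apply: ler_wpM2l; [apply: ltW | apply: pos_ge].
Qed.

End NetworkCalculus.

Lemma sum_setU_disjoint (V : nmodType) (I : finType) (X Y : {set I}) (F : I -> V) :
  [disjoint X & Y] -> \sum_(i in X :|: Y) F i = \sum_(i in X) F i + \sum_(i in Y) F i.
Proof. by move=> XY; rewrite -bigU //; apply: eq_bigl => i; rewrite !inE. Qed.

Section SingleNode.
Context {R : realType}.

Lemma backlogged_period_start (B : R -> R) t e :
  (forall v, 0 <= v -> 0 <= B v) -> B 0 = 0 -> 0 <= t -> 0 < e ->
  exists u s, [/\ 0 <= u <= s, s <= t, s - u < e, B u = 0
    & forall v, s < v -> v < t -> 0 < B v].
Proof.
move=> B_ge0 B_0 t0 e0.
pose idle := [set v | 0 <= v /\ v <= t /\ B v = 0]%classic.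
have idle_sup : has_sup idle by split; [exists 0 | exists t => v [_ []]].
have [u [u0 [ut Bu]] su] := sup_adherent e0 idle_sup.
have us : u <= sup idle by apply: sup_upper_bound.
exists u, (sup idle); split; rewrite ?u0 ?us //.
- by apply: ge_sup; [exists 0 | move=> v [_ []]].
- by rewrite ltrBlDr addrC -ltrBlDr.
move=> v sv vt; have v0 : 0 <= v by apply: le_trans (ltW sv); apply: le_trans us.
rewrite lt_def B_ge0 // andbT; apply: contraTneq sv => Bv.
by rewrite -leNgt; apply: sup_upper_bound => //; split; [|split; [apply: ltW|]].
Qed.

Variables (Flow : finType) (H L : {set Flow}) (A D : Flow -> R -> R) (Rr T Lb : R).
Hypotheses (Rr0 : 0 < Rr) (HL : [disjoint H & L])
  (Hcum : forall i, i \in H :|: L -> cumulative (A i) /\ cumulative (D i))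
  (Hcaus : forall i t, i \in H :|: L -> 0 <= t -> D i t <= A i t)
  (Hstrict : forall s t, 0 <= s -> s <= t ->
     (forall u, s < u -> u < t -> 0 < \sum_(i in H :|: L) (A i u - D i u)) ->
     rate_latency Rr T (t - s) <= \sum_(i in H :|: L) (D i t - D i s))
  (Hblock : forall s t, 0 <= s -> s <= t ->
     (forall u, s < u -> u < t -> 0 < \sum_(i in H) (A i u - D i u)) ->
     \sum_(i in L) (D i t - D i s) <= Lb).

(* Strict service is applied on the backlogged period of the class [H] ending at [t];
   the lower class [L] steals at most [Lb] of it. *)
Lemma fp_residual_service t e : 0 <= t -> 0 < e -> exists u, [/\ 0 <= u, u <= t,
  forall i, i \in H -> A i u = D i u &
  Rr * pos (t - u - T) - Lb - e <= \sum_(i in H) (D i t - D i u)].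
Proof.
move=> t0 e0.
have inH i : i \in H -> i \in H :|: L by move=> iH; rewrite inE iH.
have inL i : i \in L -> i \in H :|: L by move=> iL; rewrite inE iL orbT.
have backlog_ge0 (S : {set Flow}) v : {subset S <= H :|: L} -> 0 <= v ->
    0 <= \sum_(i in S) (A i v - D i v).
  by move=> SHL v0; apply: sumr_ge0 => i /SHL iHL; rewrite subr_ge0 Hcaus.
have backlog0 : \sum_(i in H) (A i 0 - D i 0) = 0.
  by apply: big1 => i /inH /Hcum [[-> _] [-> _]]; rewrite subrr.
have [u [s [/andP[u0 us] st su Bu busy]]] :=
  backlogged_period_start (fun v => backlog_ge0 H v inH) backlog0 t0 (divr_gt0 e0 Rr0).
exists u; split => //; first exact: le_trans st.
  move=> i iH; apply/eqP; rewrite -subr_eq0; apply/eqP.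
  by apply: (psumr_eq0P _ Bu) => // j jH; rewrite subr_ge0 Hcaus ?inH.
have s0 : 0 <= s by apply: le_trans us.
have busyHL v : s < v -> v < t -> 0 < \sum_(i in H :|: L) (A i v - D i v).
  move=> sv vt; rewrite sum_setU_disjoint //; have := busy v sv vt.
  by have := backlog_ge0 L v inL (le_trans s0 (ltW sv)); lra.
have service := Hstrict s0 st busyHL; rewrite sum_setU_disjoint // /rate_latency in service.
have blocked := Hblock s0 st busy.
have D_mono : \sum_(i in H) (D i t - D i s) <= \sum_(i in H) (D i t - D i u).
  by apply: ler_sum => i /inH /Hcum [_ [_ Dmono]]; rewrite lerB // Dmono.
have latency : Rr * pos (t - u - T) - e <= Rr * pos (t - s - T).
  have lip : pos (t - u - T) - pos (t - s - T) <= s - u.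
    by apply: le_trans (posB_le _) _; lra.
  have : (s - u) * Rr < e by rewrite -ltr_pdivlMr.
  have : Rr * (pos (t - u - T) - pos (t - s - T)) <= Rr * (s - u).
    by apply: ler_wpM2l => //; apply: ltW.
  lra.
lra.
Qed.

End SingleNode.

Lemma backward_choice (R : numDomainType) (Q : nat -> R -> R -> Prop) n t : 0 <= t ->
  (forall m x, (m < n)%N -> 0 <= x -> exists y, [/\ 0 <= y, y <= x & Q m x y]) ->
  exists tau : nat -> R, [/\ tau n = t, forall m, 0 <= tau m,
    forall m, tau m <= tau m.+1 & forall m, (m < n)%N -> Q m (tau m.+1) (tau m)].
Proof.
elim: n t => [|n IH] t t0 step; first by exists (fun=> t); split.
have [y [y0 yt Qy]] := step n t (ltnSn n) t0.
have [tau [tau_n tau0 tau_mono tauQ]] := IH y y0 (fun m x mn => step m x (ltnW mn)).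
exists (fun m => if (m <= n)%N then tau m else t); split => [|m|m|m].
- by rewrite ltnn.
- by case: ifP.
- by case: (ltngtP m n) => // ->; rewrite tau_n.
- rewrite ltnS; case: (ltngtP m n) => [mn _|//|-> _]; first exact: tauQ.
  by rewrite tau_n.
Qed.

Section Tandem.
Context {R : realType}.
Variables (a d : nat -> R -> R) (tau : nat -> R).

Lemma tandem_telescope L :
  (forall q, (q < L)%N -> a q.+1 = d q) ->
  (forall q, (q <= L)%N -> a q (tau q) = d q (tau q)) ->
  \sum_(q < L.+1) (d q (tau q.+1) - d q (tau q)) = d L (tau L.+1) - a 0%N (tau 0%N).
Proof.
elim: L => [|L IH] link idle; first by rewrite big_ord1 idle.
rewrite big_ord_recr /= IH => [|q qL|q qL]; last 2 first.
- by apply: link; apply: ltnW.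
- by apply: idle; apply: leqW.
by rewrite -(link L (ltnSn L)) idle //; lra.
Qed.

Lemma tandem_causal L x :
  (forall q, (q < L)%N -> a q.+1 = d q) ->
  (forall q y, (q <= L)%N -> 0 <= y -> d q y <= a q y) ->
  0 <= x -> d L x <= a 0%N x.
Proof.
elim: L => [|L IH] link causal x0; first exact: causal.
apply: le_trans (causal _ _ (leqnn _) x0) _; rewrite link //.
apply: IH => // [q qL|q y qL]; first by apply: link; apply: ltnW.
by apply: causal; apply: leqW.
Qed.

Lemma tandem_burst_bound L sg rh :
  (forall q, (q < L)%N -> a q.+1 = d q) ->
  (forall q, (q <= L)%N -> a q (tau q) = d q (tau q)) ->
  (forall q y, (q <= L)%N -> 0 <= y -> d q y <= a q y) ->
  cumulative (a 0%N) -> arrival_curve (a 0%N) (leaky_bucket sg rh) ->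
  0 <= sg -> 0 <= rh -> 0 <= tau 0%N -> tau 0%N <= tau L.+1 ->
  \sum_(q < L.+1) (d q (tau q.+1) - d q (tau q) - rh * (tau q.+1 - tau q)) <= sg.
Proof.
move=> link idle causal cum arr sg0 rh0 tau0 tauL.
rewrite sumrB tandem_telescope // -mulr_sumr.
rewrite -(big_mkord xpredT (fun q => tau q.+1 - tau q)) telescope_sumr //.
have := tandem_causal link causal (le_trans tau0 tauL).
have := leaky_bucket_increment cum arr sg0 rh0 tau0 tauL.
lra.
Qed.

End Tandem.

Lemma big_ord_addn_ltn (V : nmodType) (F : nat -> V) K c b :
  \sum_(q < K | (c + q < b)%N) F q = \sum_(q < minn K (b - c)) F q.
Proof.
rewrite -(big_mkord (fun q => c + q < b)%N) -(big_mkord xpredT).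
rewrite (big_nat_widen _ _ _ _ _ (geq_minl K (b - c))) big_nat_cond [RHS]big_nat_cond.
by apply: eq_bigl => q /=; apply/idP/idP; lia.
Qed.

Section RingArith.
Variable M : nat.
Hypothesis HM : (0 < M)%N.

Lemma ring_node_ltn a m : (ring_node M a m < M)%N.
Proof. exact: ltn_pmod. Qed.

Lemma ring_node0 a : (a < M)%N -> ring_node M a 0 = a.
Proof. by move=> aM; rewrite /ring_node addn0 modn_small. Qed.

Lemma ring_node_inj a p q : (p < M)%N -> (q < M)%N ->
  ring_node M a p = ring_node M a q -> p = q.
Proof. by rewrite /ring_node => pM qM /eqP; rewrite eqn_modDl !modn_small // => /eqP. Qed.

Lemma ring_node_offset a b q : (a < M)%N ->
  ring_node M a ((b + M - a) %% M + q) = ring_node M b q.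
Proof.
move=> aM; rewrite /ring_node addnCA modnDml.
by rewrite (_ : b + M - a + (a + q) = b + q + M)%N ?modnDr //; lia.
Qed.

Lemma ring_node_wrap a b q : (a < M)%N ->
  ring_node M a q = ring_node M b (M - (b + M - a) %% M + q).
Proof.
move=> aM; rewrite -(ring_node_offset b _ aM) addnA subnKC; last exact/ltnW/ltn_pmod.
by rewrite /ring_node addnCA modnDl.
Qed.

End RingArith.

Section Ring.
Variables (R : realType) (M : nat) (Flow : finType)
  (first h P : Flow -> nat) (Lmax rho sigma0 : Flow -> R)
  (sigma : Flow -> nat -> R) (Rk Tk : nat -> R) (A D : Flow -> nat -> R -> R).
Hypotheses (HM : (0 < M)%N)
  (Hfirst : forall i, (first i < M)%N)
  (Hh : forall i, (0 < h i <= M)%N)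
  (HR : forall k, (k < M)%N -> 0 < Rk k)
  (Hrho : forall i, 0 <= rho i)
  (Hsig0 : forall i, 0 <= sigma0 i)
  (Hsig : forall i k, 0 <= sigma i k)
  (HL : forall i, 0 <= Lmax i)
  (Hstab : forall k, (k < M)%N -> \sum_(i | crosses M first h i k) rho i <= Rk k)
  (Hcum : forall i k, crosses M first h i k -> cumulative (A i k) /\ cumulative (D i k))
  (Hcaus : forall i k t, crosses M first h i k -> 0 <= t -> D i k t <= A i k t)
  (Hcons : forall i m, (m.+1 < h i)%N ->
     A i (ring_node M (first i) m.+1) = D i (ring_node M (first i) m))
  (Harr0 : forall i, arrival_curve (A i (first i)) (leaky_bucket (sigma0 i) (rho i)))
  (Harr : forall i k, crosses M first h i k ->
     arrival_curve (A i k) (leaky_bucket (sigma i k) (rho i)))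
  (Hstrict : forall k s t, (k < M)%N -> 0 <= s -> s <= t ->
     (forall u, s < u -> u < t -> 0 < \sum_(i | crosses M first h i k) (A i k u - D i k u)) ->
     rate_latency (Rk k) (Tk k) (t - s) <= \sum_(i | crosses M first h i k) (D i k t - D i k s))
  (Hfp : forall g k s t, crosses M first h g k -> 0 <= s -> s <= t ->
     (forall u, s < u -> u < t ->
        0 < \sum_(i in g |: hp M first h P g k) (A i k u - D i k u)) ->
     \sum_(j in lp M first h P g k) (D j k t - D j k s)
       <= \big[Num.max/0]_(j in lp M first h P g k) Lmax j).
Variables (f : Flow) (n : nat).
Hypothesis (Hn : (1 <= n <= h f)%N).

Local Notation cross := (crosses M first h).
Local Notation node := (ring_node M (first f)).
Local Notation hp_f := (hp M first h P f).
Local Notation lp_f := (lp M first h P f).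
Local Notation K_f := (Kle M first h P f n).
Definition blocking k := \big[Num.max/0]_(j in lp_f k) Lmax j.
Local Notation lat k := (Tk k + blocking k / Rk k).
Definition resR k := Rk k - \sum_(j in hp_f k) rho j.
Local Notation Rsub := (\big[Num.min/resR (node 0%N)]_(m < n) resR (node m)).
Local Notation burst j := (sigma j (first f) * (cross j (first f) && (first j != first f))%:R
                           + sigma0 j * (cross f (first j))%:R).
Local Notation Tsub := (\sum_(m < n) lat (node m)
  + \sum_(i in K_f) sigma i (first f) * (cross i (first f) && (first i != first f))%:R / Rsub
  + \sum_(i in K_f) (sigma0 i * (cross f (first i))%:R
                     + rho i * \sum_(m < n | cross i (node m)) lat (node m)) / Rsub).
(* [Rsub * Tsub] with the divisions by [Rsub] cleared. *)
Local Notation RTsub := (Rsub * \sum_(m < n) lat (node m)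
  + \sum_(j in K_f) (burst j + rho j * \sum_(m < n | cross j (node m)) lat (node m))).

Lemma crossesP i k :
  reflect (exists2 p, (p < h i)%N & k = ring_node M (first i) p) (cross i k).
Proof.
rewrite /crosses /path_nodes; apply: (iffP mapP).
  by case=> p; rewrite mem_iota add0n => /andP[_ hp] ->; exists p.
by case=> p hp ->; exists p => //; rewrite mem_iota add0n.
Qed.

Lemma crosses_path i p : (p < h i)%N -> cross i (ring_node M (first i) p).
Proof. by move=> ph; apply/crossesP; exists p. Qed.

Lemma crosses_ring_node i p : (p < M)%N ->
  cross i (ring_node M (first i) p) = (p < h i)%N.
Proof.
move=> pM; apply/crossesP/idP => [[q qh /ring_node_inj eq_pq]|]; last by exists p.
have /andP[_ hM] := Hh i.
by rewrite eq_pq //; apply: leq_trans hM.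
Qed.

Lemma f_notin_hp k : f \notin hp_f k.
Proof. by rewrite inE eqxx. Qed.

Lemma crosses_hp_lp k i : cross f k -> cross i k = (i \in (f |: hp_f k) :|: lp_f k).
Proof.
move=> cfk; rewrite !inE; case: (eqVneq i f) => [->|_] /=; first by rewrite cfk.
by case: (cross i k) => //=; case: leqP.
Qed.

Lemma disjoint_hp_lp k : [disjoint f |: hp_f k & lp_f k].
Proof.
rewrite -setI_eq0; apply/eqP/setP => i; rewrite !inE.
by case: (eqVneq i f) => [->|_]; rewrite ?ltnn ?andbF //=; case: leqP; rewrite ?andbF.
Qed.

Lemma blocking_ge0 k : 0 <= blocking k.
Proof.
by rewrite /blocking; apply: (big_ind (fun x => 0 <= x)) => // x y x0 y0; rewrite le_max x0.
Qed.

Lemma n_gt0 : (0 < n)%N.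
Proof. by case/andP: Hn. Qed.

Lemma crosses_f_node m : (m < n)%N -> cross f (node m).
Proof. by case/andP: Hn => _ nh mn; apply: crosses_path; apply: leq_trans nh. Qed.

Lemma node0 : node 0 = first f.
Proof. exact: ring_node0. Qed.

Lemma sum_crosses k (G : Flow -> R) : cross f k ->
  \sum_(i | cross i k) G i = \sum_(i in (f |: hp_f k) :|: lp_f k) G i.
Proof. by move=> cfk; apply: eq_bigl => i; rewrite crosses_hp_lp. Qed.

Lemma resR_ge0 k : (k < M)%N -> cross f k -> 0 <= resR k.
Proof.
move=> kM cfk; rewrite /resR subr_ge0; apply: le_trans (Hstab kM).
rewrite sum_crosses // sum_setU_disjoint ?disjoint_hp_lp // big_setU1 ?f_notin_hp //=.
have := Hrho f; have : 0 <= \sum_(i in lp_f k) rho i by apply: sumr_ge0.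
lra.
Qed.

Lemma mem_hp_Kle m j : (m < n)%N ->
  (j \in hp_f (node m)) = (j \in K_f) && cross j (node m).
Proof.
move=> mn; rewrite !inE; case cjm: (cross j (node m)); last by rewrite !andbF.
suff -> : has (cross j) (path_nodes M (first f) n) by rewrite !andbT.
by apply/hasP; exists (node m) => //; apply: map_f; rewrite mem_iota.
Qed.

Lemma sum_hp_exchange (G : Flow -> nat -> R) :
  \sum_(m < n) \sum_(j in hp_f (node m)) G j m
  = \sum_(j in K_f) \sum_(m < n | cross j (node m)) G j m.
Proof.
under eq_bigr => m _ do rewrite big_mkcond.
rewrite exchange_big /= [RHS]big_mkcond; apply: eq_bigr => j _.
case: ifP => jK; last by apply: big1 => m _; rewrite mem_hp_Kle // jK.
by rewrite [RHS]big_mkcond; apply: eq_bigr => m _; rewrite mem_hp_Kle // jK.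
Qed.

Lemma Rsub_le m : (m < n)%N -> Rsub <= resR (node m).
Proof. by move=> mn; apply: (bigmin_le _ (Ordinal mn)). Qed.

Lemma Rsub_ge0 : 0 <= Rsub.
Proof.
by apply: le_bigmin => [|m _]; apply: resR_ge0; rewrite ?ring_node_ltn ?crosses_f_node ?n_gt0.
Qed.

Definition backlog_start e m x y :=
  (forall i, i \in f |: hp_f (node m) -> A i (node m) y = D i (node m) y) /\
  (Rsub + \sum_(j in hp_f (node m)) rho j) * (x - y - lat (node m))
    <= \sum_(i in f |: hp_f (node m)) (D i (node m) x - D i (node m) y) + e.

Lemma backlog_start_exists m x e : (m < n)%N -> 0 <= x -> 0 < e ->
  exists y, [/\ 0 <= y, y <= x & backlog_start e m x y].
Proof.
move=> mn x0 e0; set k := node m.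
have kM : (k < M)%N by apply: ring_node_ltn.
have cfk : cross f k by apply: crosses_f_node.
have inHL i : i \in (f |: hp_f k) :|: lp_f k -> cross i k by rewrite -crosses_hp_lp.
have strict s t : 0 <= s -> s <= t ->
    (forall u, s < u -> u < t ->
       0 < \sum_(i in (f |: hp_f k) :|: lp_f k) (A i k u - D i k u)) ->
    rate_latency (Rk k) (Tk k) (t - s)
      <= \sum_(i in (f |: hp_f k) :|: lp_f k) (D i k t - D i k s).
  move=> s0 st busy; rewrite -sum_crosses // Hstrict // => u su ut.
  by rewrite sum_crosses ?busy.
have [y [y0 yx idle bound]] := fp_residual_service (HR kM) (disjoint_hp_lp k)
  (fun i iHL => Hcum (inHL i iHL)) (fun i t iHL => Hcaus (inHL i iHL)) strict
  (fun s t => Hfp cfk) x0 e0.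
exists y; split => //; split => //.
have out_ge0 : 0 <= \sum_(i in f |: hp_f k) (D i k x - D i k y).
  apply: sumr_ge0 => i iH; rewrite subr_ge0.
  have iHL : i \in (f |: hp_f k) :|: lp_f k by rewrite inE iH.
  by have [_ [_ ->]] := Hcum (inHL i iHL).
apply: residual_rate_latency (HR kM) (blocking_ge0 k) _ _ _ _.
- by apply: addr_ge0; [apply: Rsub_ge0 | apply: sumr_ge0].
- by have := Rsub_le mn; rewrite /resR; lra.
- by apply: addr_ge0 => //; apply: ltW.
- by rewrite /blocking; lra.
Qed.

Section BacklogTimes.
Variables (e : R) (tau : nat -> R).
Hypotheses (tau_ge0 : forall m, 0 <= tau m) (tau_mono : forall m, tau m <= tau m.+1)
  (tau_start : forall m, (m < n)%N -> backlog_start e m (tau m.+1) (tau m)).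

Local Notation excess j m :=
  (D j (node m) (tau m.+1) - D j (node m) (tau m) - rho j * (tau m.+1 - tau m)).

Lemma tau_homo : {homo tau : a b / (a <= b)%N >-> a <= b}.
Proof. by apply: homo_leq => // y x z; apply: le_trans. Qed.

Lemma idle_at m i : (m < n)%N -> i \in f |: hp_f (node m) ->
  A i (node m) (tau m) = D i (node m) (tau m).
Proof. by move=> mn; apply: (proj1 (tau_start mn)). Qed.

Lemma arc_burst_bound j lo K p0 sg : j \in K_f -> (lo + K <= n)%N ->
  (forall q, (q < K)%N -> node (lo + q) = ring_node M (first j) (p0 + q)) ->
  ((p0 < h j)%N -> (0 < K)%N -> arrival_curve (A j (node lo)) (leaky_bucket sg (rho j))) ->
  0 <= sg ->
  \sum_(q < K | (p0 + q < h j)%N) excess j (lo + q) <= sg.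
Proof.
move=> jK loK align arr sg0; rewrite (big_ord_addn_ltn (fun q => excess j (lo + q))).
case: (posnP (minn K (h j - p0))) => [->|L_pos]; first by rewrite big_ord0.
rewrite -(prednK L_pos); set L := (minn K (h j - p0)).-1.
pose nj q := ring_node M (first j) (p0 + q).
have L_lt q : (q <= L)%N -> [/\ (q < K)%N, (lo + q < n)%N & (p0 + q < h j)%N].
  by move: L_pos; rewrite /L => ? ?; split; lia.
rewrite (eq_bigr (fun q : 'I_L.+1 => D j (nj q) (tau (lo + q.+1)) - D j (nj q) (tau (lo + q))
                   - rho j * (tau (lo + q.+1) - tau (lo + q)))); last first.
  by move=> q _; have [qK _ _] := L_lt q (ltn_ord q); rewrite addnS align.
apply: (tandem_burst_bound (a := fun q => A j (nj q)) (d := fun q => D j (nj q))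
                           (tau := fun q => tau (lo + q))) => //.
- move=> q qL; rewrite /nj addnS; apply: Hcons.
  by have [_ _] := L_lt q.+1 qL; rewrite addnS.
- move=> q qL; have [qK qn qh] := L_lt q qL.
  by rewrite /nj -align // idle_at // in_setU1 mem_hp_Kle // jK align // crosses_path ?orbT.
- move=> q y qL y0; have [_ _ qh] := L_lt q qL.
  by rewrite /nj; apply: Hcaus => //; exact: crosses_path qh.
- have [_ _ ph] := L_lt 0%N isT; rewrite addn0 in ph.
  by rewrite /nj addn0; case: (Hcum (crosses_path ph)).
- have [K_pos _ ph] := L_lt 0%N isT; rewrite addn0 in ph.
  by rewrite /nj -align // addn0; apply: arr.
- by apply: tau_homo; rewrite leq_add2l.
Qed.

(* With [d] the distance from [first f] to [first j] along the ring, the nodes of [f]'s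
   subpath crossed by [j] form an arc of [j]'s path inside [[0, d)], entering at
   [first f], and one inside [[d, n)], starting at [first j]. *)
Lemma flow_burst_bound j : j \in K_f ->
  \sum_(m < n | cross j (node m)) excess j m <= burst j.
Proof.
move=> jK; set d := ((first j + M - first f) %% M)%N.
have dM : (d < M)%N by apply: ltn_pmod.
have nM : (n <= M)%N by case/andP: Hn => _ /leq_trans; apply; case/andP: (Hh f).
rewrite -(big_mkord (fun m => cross j (node m)) (fun m => excess j m)).
rewrite (big_cat_nat (leq0n (minn d n)) (geq_minr d n)) /=; apply: lerD.
  rewrite big_mkord (eq_bigl (fun q : 'I_(minn d n) => M - d + q < h j)%N); last first.
    move=> q; rewrite (@ring_node_wrap _ HM _ (first j)) ?crosses_ring_node //.
    by have := ltn_ord q; rewrite leq_min; lia.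
  apply: (arc_burst_bound (lo := 0%N)) => //.
  - by rewrite add0n geq_minr.
  - by move=> q _; rewrite add0n (@ring_node_wrap _ HM _ (first j)).
  - move=> Mdh d_pos; have first_jf : first j != first f.
      by apply: contraTneq d_pos; rewrite /d => ->; rewrite addKn modnn min0n.
    have cjf : cross j (first f).
      rewrite -{1}node0 (@ring_node_wrap _ HM _ (first j)) // addn0 crosses_ring_node //.
      by rewrite -/d; lia.
    by rewrite cjf first_jf mulr1 node0; apply: Harr.
  - by apply: mulr_ge0.
case: (ltnP d n) => [dn | nd]; last by rewrite big_geq // mulr_ge0.
rewrite -{1}[d]add0n big_addn big_mkord.
rewrite (eq_bigl (fun q : 'I_(n - d) => 0 + q < h j)%N); last first.
  by move=> q; rewrite addnC ring_node_offset ?crosses_ring_node //; have := ltn_ord q; lia.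
rewrite (eq_bigr (fun q : 'I_(n - d) => excess j (d + q))) => [|q _]; last by rewrite addnC.
apply: (arc_burst_bound (lo := d)) => //.
- by rewrite subnKC // ltnW.
- by move=> q _; rewrite ring_node_offset.
- move=> _ _; have node_d : node d = first j.
    by rewrite -[d]addn0 ring_node_offset // ring_node0.
  by rewrite -node_d crosses_f_node // mulr1 node_d; apply: Harr0.
- by apply: mulr_ge0.
Qed.

Lemma output_telescope :
  \sum_(m < n) (D f (node m) (tau m.+1) - D f (node m) (tau m))
  = D f (node n.-1) (tau n) - A f (first f) (tau 0%N).
Proof.
have /andP[_ nh] := Hn.
have := @tandem_telescope _ (fun m => A f (node m)) (fun m => D f (node m)) tau n.-1.
rewrite prednK ?n_gt0 //= node0; apply=> q qn.
  by apply: Hcons; apply: leq_trans nh; lia.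
by apply: idle_at; rewrite ?setU11 //; lia.
Qed.

Lemma subpath_sum_bound :
  Rsub * (tau n - tau 0%N)
    <= D f (node n.-1) (tau n) - A f (first f) (tau 0%N) + n%:R * e + RTsub.
Proof.
pose gap m := tau m.+1 - tau m.
pose interference j m :=
  rho j * (gap m - lat (node m)) - (D j (node m) (tau m.+1) - D j (node m) (tau m)).
have step m : (m < n)%N ->
    Rsub * (gap m - lat (node m)) + \sum_(j in hp_f (node m)) interference j m
    <= D f (node m) (tau m.+1) - D f (node m) (tau m) + e.
  move=> mn; have [_] := tau_start mn.
  rewrite big_setU1 ?f_notin_hp //= mulrDl mulr_suml sumrB.
  by rewrite /interference /gap !sumrB; lra.
have flows : - \sum_(j in K_f) (burst j + rho j * \sum_(m < n | cross j (node m)) lat (node m))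
    <= \sum_(j in K_f) \sum_(m < n | cross j (node m)) interference j m.
  rewrite -sumrN; apply: ler_sum => j jK; have := flow_burst_bound jK.
  have -> : \sum_(m < n | cross j (node m)) interference j m
      = - \sum_(m < n | cross j (node m)) excess j m
        - rho j * \sum_(m < n | cross j (node m)) lat (node m).
    by rewrite mulr_sumr -sumrN -sumrB; apply: eq_bigr => m _; rewrite /interference /gap; lra.
  lra.
have total : \sum_(m < n)
      (Rsub * (gap m - lat (node m)) + \sum_(j in hp_f (node m)) interference j m)
    <= \sum_(m < n) (D f (node m) (tau m.+1) - D f (node m) (tau m) + e).
  by apply: ler_sum => m _; apply: step.
rewrite big_split /= sum_hp_exchange big_split /= output_telescope in total.
rewrite sumr_const card_ord -mulr_natl -mulr_sumr sumrB in total.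
rewrite -(big_mkord xpredT gap) telescope_sumr // in total.
lra.
Qed.

End BacklogTimes.

Lemma subpath_witness t e : 0 <= t -> 0 < e -> exists2 s, 0 <= s <= t &
  A f (first f) s <= D f (node n.-1) t /\
  Rsub * (t - s) <= D f (node n.-1) t - A f (first f) s + e + RTsub.
Proof.
move=> t0 e0; have n0 : n%:R != 0 :> R by rewrite pnatr_eq0 -lt0n n_gt0.
have e'0 : 0 < e / n%:R by rewrite divr_gt0 // ltr0n n_gt0.
have [tau [tau_n tau_ge0 tau_mono tau_start]] :=
  backward_choice t0 (fun m x mn x0 => backlog_start_exists mn x0 e'0).
have tau_0n : tau 0%N <= tau n by apply: tau_homo.
exists (tau 0%N); first by rewrite tau_ge0 -tau_n.
split; last first.
  have := subpath_sum_bound tau_ge0 tau_mono tau_start.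
  by rewrite tau_n [n%:R * _]mulrC divfK.
rewrite -subr_ge0 -tau_n -(output_telescope tau_start); apply: sumr_ge0 => m _.
by rewrite subr_ge0; have [_ [_ ->]] // := Hcum (crosses_f_node (ltn_ord m)).
Qed.

Lemma Rsub_mul_Tsub : Rsub != 0 -> Rsub * Tsub = RTsub.
Proof.
move=> Rsub_neq0; have div_Rsub x : Rsub * (x / Rsub) = x by rewrite mulrC divfK.
rewrite !mulrDr -addrA; congr (_ + _).
rewrite !mulr_sumr -big_split /=; apply: eq_bigr => j _.
by rewrite !div_Rsub addrA.
Qed.

Theorem subpath_service_curve :
  service_curve (A f (first f)) (D f (node n.-1)) (rate_latency Rsub Tsub).
Proof.
apply: rate_latency_service_curve Rsub_ge0 _ => [|t e t0 e0].
  by rewrite -node0; case: (Hcum (crosses_f_node n_gt0)).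
have [s s_t [AD bound]] := subpath_witness t0 e0.
exists s => //; split; first by have := ltW e0; lra.
case: (eqVneq Rsub 0) => [->|Rsub_neq0]; first by rewrite mul0r addr0; lra.
by rewrite !mulrBr Rsub_mul_Tsub //; lra.
Qed.

End Ring.

Theorem corollary2
  (R : realType) (M : nat) (Flow : finType)
  (first h P : Flow -> nat)                 (* first hop, number of hops, priority level *)
  (Lmax rho sigma0 : Flow -> R)             (* max packet length, rate, initial burst *)
  (sigma : Flow -> nat -> R)                (* sigma i k = sigma_i^{k (-) 1}: burst at input of node k *)
  (Rk Tk : nat -> R)                        (* rate-latency parameters of node k *)
  (A D : Flow -> nat -> R -> R)             (* A i k / D i k : input / output of flow i at node k *)
  (HM : (0 < M)%N)
  (Hfirst : forall i, (first i < M)%N)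
  (Hh : forall i, (0 < h i <= M)%N)
  (HR : forall k, (k < M)%N -> 0 < Rk k)
  (HT : forall k, (k < M)%N -> 0 <= Tk k)
  (Hrho : forall i, 0 <= rho i)
  (Hsig0 : forall i, 0 <= sigma0 i)
  (Hsig : forall i k, 0 <= sigma i k)
  (HL : forall i, 0 <= Lmax i)
  (* stability *)
  (Hstab : forall k, (k < M)%N -> \sum_(i | crosses M first h i k) rho i <= Rk k)
  (* cumulative functions, causality, flow conservation along the path *)
  (Hcum : forall i k, crosses M first h i k -> cumulative (A i k) /\ cumulative (D i k))
  (Hcaus : forall i k t, crosses M first h i k -> 0 <= t -> D i k t <= A i k t)
  (Hcons : forall i m, (m.+1 < h i)%N ->
     A i (ring_node M (first i) m.+1) = D i (ring_node M (first i) m))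
  (* leaky-bucket arrival curves *)
  (Harr0 : forall i, arrival_curve (A i (first i)) (leaky_bucket (sigma0 i) (rho i)))
  (Harr : forall i k, crosses M first h i k ->
     arrival_curve (A i k) (leaky_bucket (sigma i k) (rho i)))
  (* node k offers the strict rate-latency service curve beta^k to the aggregate *)
  (Hstrict : forall k s t, (k < M)%N -> 0 <= s -> s <= t ->
     (forall u, s < u -> u < t -> 0 < \sum_(i | crosses M first h i k) (A i k u - D i k u)) ->
     rate_latency (Rk k) (Tk k) (t - s) <= \sum_(i | crosses M first h i k) (D i k t - D i k s))
  (* non-preemptive fixed priority: during a backlogged period of the flows of priority
     <= P(g), lower-priority flows are served for at most one (maximal) packet *)
  (Hfp : forall g k s t, crosses M first h g k -> 0 <= s -> s <= t ->
     (forall u, s < u -> u < t ->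
        0 < \sum_(i in g |: hp M first h P g k) (A i k u - D i k u)) ->
     \sum_(j in lp M first h P g k) (D j k t - D j k s)
       <= \big[Num.max/0]_(j in lp M first h P g k) Lmax j)
  (f : Flow) (n : nat) (Hn : (1 <= n <= h f)%N) :
  let node := ring_node M (first f) in
  let resR := fun k => Rk k - \sum_(j in hp M first h P f k) rho j in
  let Rsub := \big[Num.min/resR (node 0%N)]_(m < n) resR (node m) in
  let lat := fun k => Tk k + (\big[Num.max/0]_(j in lp M first h P f k) Lmax j) / Rk k in
  let Tsub :=
      \sum_(m < n) lat (node m)
    + \sum_(i in Kle M first h P f n)
        sigma i (first f) * (crosses M first h i (first f) && (first i != first f))%:R / Rsub
    + \sum_(i in Kle M first h P f n)
        (sigma0 i * (crosses M first h f (first i))%:R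
         + rho i * \sum_(m < n | crosses M first h i (node m)) lat (node m)) / Rsub in
  service_curve (A f (first f)) (D f (node n.-1)) (rate_latency Rsub Tsub).
Proof. exact: subpath_service_curve. Qed.
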